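(* Let $M$ be a positive integer and $L$ a positive divisor of $M$ with $L^*>2$, and let $\ell$ be the number of prime divisors of $L$. Then $I_1(L,M)=\varphi(L^* )\big(M^2/L^*-(-1)^\ell\epsilon\big)/8$, where $\epsilon=1$ if $M$ is odd, $\epsilon=2$ if $M\equiv2\bmod4$ and $L^*$ is even, and $\epsilon=0$ otherwise.
   Context: For a positive integer $n$, $n^*$ denotes the product of the distinct prime divisors of $n$, and $\varphi$ is Euler's totient function. For a positive integer $M$, a positive divisor $L$ of $M$ and an integer $k\ge0$, $I_k(L,M)=\sum_t t^k$, the sum over integers $t$ with $0<t<M/2$ and $\gcd(t,L)=1$. *)

From mathcomp Require Import all_boot all_order all_algebra.
Set Implicit Arguments. Unset Strict Implicit. Unset Printing Implicit Defensive.

Definition nstar (n : nat) : nat := \prod_(p <- primes n) p.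

Definition Isum (k L M : nat) : nat :=
  \sum_(0 <= t < M | (0 < t) && (2 * t < M) && coprime t L) t ^ k.

Definition eps (L M : nat) : nat :=
  if odd M then 1
  else if (M %% 4 == 2) && ~~ odd (nstar L) then 2 else 0.

From mathcomp Require Import all_boot all_order all_algebra.
From mathcomp Require Import zify ring.
Import GRing.Theory Num.Theory.

Set Implicit Arguments.
Unset Strict Implicit.
Unset Printing Implicit Defensive.

(* Only the square-free kernel P = L^* matters for coprimality.  Discarding
   the multiples of a prime p not dividing P is one inclusion-exclusion step,
   I_k(pP, M) = I_k(P, M) - p^k I_k(P, M/p), and for k = 1 the defect
   phi(P) M^2 / P - 8 I_1(P, M) obeys the same recursion; for P = 1 it is 1
   or 2M according to the parity of M.  Over the odd primes of L the
   recursion keeps the parity of M, giving (-1)^l phi(P) for odd M and 0 for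
   even M; a prime factor 2 adds one step from M to M/2, and M/2 is odd
   exactly when M = 2 mod 4. *)

Lemma big_nat_dvd (R : Type) (idx : R) (op : Monoid.com_law idx)
    (p m : nat) (P : pred nat) (F : nat -> R) : 0 < p ->
  \big[op/idx]_(0 <= t < m * p | (p %| t) && P t) F t =
  \big[op/idx]_(0 <= u < m | P (u * p)) F (u * p).
Proof.
move=> p_gt0; elim: m => [|m IHm]; first by rewrite mul0n !big_geq.
rewrite mulSnr (big_cat_nat (leq0n _) (leq_addr _ _)) /= IHm.
rewrite [RHS]big_mkcond big_nat_recr //= -big_mkcond; congr (op _ _).
rewrite big_ltn_cond ?dvdn_mull // /=; last by lia.
rewrite big1_seq ?Monoid.mulm1 // => _ /andP[/andP[/dvdnP[u ->] _]].
by rewrite mem_index_iota -mulSnr ltn_pmul2r // ltn_pmul2r // ltnS; lia.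
Qed.

Lemma coprime_prod_primes t s : all prime s ->
  coprime t (\prod_(p <- s) p) = all (fun p => ~~ (p %| t)) s.
Proof.
elim: s => [|p s IHs] /=; first by rewrite big_nil coprimen1.
case/andP=> p_pr s_pr; rewrite big_cons coprimeMr IHs //.
by rewrite coprime_sym prime_coprime.
Qed.

Lemma prime_coprime_prod p s : prime p -> p \notin s -> all prime s ->
  coprime p (\prod_(q <- s) q).
Proof.
move=> p_pr p_s s_pr; rewrite coprime_prod_primes //; apply/allP=> q q_s.
by rewrite dvdn_prime2 ?(allP s_pr q q_s) //; apply: contraNneq p_s => <-.
Qed.

Lemma prod_primes_gt0 s : all prime s -> 0 < \prod_(p <- s) p.
Proof. by move=> s_pr; rewrite big_seq prodn_cond_gt0 // => p /(allP s_pr)/prime_gt0. Qed.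

Lemma odd_prod_primes s : all prime s -> odd (\prod_(p <- s) p) = (2 \notin s).
Proof.
move=> s_pr; rewrite -coprime2n coprime_prod_primes // -has_pred1 -all_predC.
by apply: eq_in_all => q /(allP s_pr) q_pr /=; rewrite dvdn_prime2.
Qed.

Lemma coprime_primes t L : 0 < t -> 0 < L ->
  coprime t L = all (fun p => ~~ (p %| t)) (primes L).
Proof.
move=> t_gt0 L_gt0; rewrite coprime_has_primes // -all_predC.
by apply: eq_in_all => p; rewrite mem_primes => /andP[p_pr _] /=; rewrite mem_primes p_pr t_gt0.
Qed.

Lemma coprime_nstar t L : 0 < t -> 0 < L -> coprime t (nstar L) = coprime t L.
Proof.
by move=> t_gt0 L_gt0; rewrite [RHS]coprime_primes // coprime_prod_primes ?all_prime_primes.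
Qed.

Lemma totient_mul_prime p n : prime p -> coprime p n ->
  totient (p * n) = p.-1 * totient n.
Proof. by move=> p_pr pn; rewrite totient_coprime // totient_prime. Qed.

Lemma all_dvdn_divn p s M : prime p -> p \notin s -> all prime s -> p %| M ->
  all (dvdn^~ M) s -> all (dvdn^~ (M %/ p)) s.
Proof.
move=> p_pr p_s s_pr /dvdnP[m ->] /allP s_M; rewrite mulnK ?prime_gt0 //.
apply/allP=> q q_s; rewrite -(@Gauss_dvdl _ _ p) ?s_M // prime_coprime ?(allP s_pr) //.
by rewrite dvdn_prime2 ?(allP s_pr q q_s) //; apply: contraNneq p_s => <-.
Qed.

Lemma Isum_nstar k L M : 0 < L -> Isum k (nstar L) M = Isum k L M.
Proof. by move=> L_gt0; apply: eq_bigl => -[|t] //=; rewrite coprime_nstar. Qed.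

Lemma Isum_mul_prime k p P M : prime p -> coprime p P -> p %| M ->
  Isum k P M = Isum k (p * P) M + p ^ k * Isum k P (M %/ p).
Proof.
move=> p_pr pP /dvdnP[m ->]; have p_gt0 := prime_gt0 p_pr.
rewrite mulnK // /Isum (bigID (dvdn p)) /= addnC; congr (_ + _).
  apply: eq_bigl => t; rewrite coprimeMr [coprime t p]coprime_sym (prime_coprime t p_pr).
  by case: (p %| t); rewrite ?andbF ?andbT.
rewrite (eq_bigl (fun t => (p %| t) && [&& 0 < t, 2 * t < m * p & coprime t P])); last first.
  by move=> t; rewrite andbC !andbA.
rewrite big_nat_dvd // big_distrr; apply: eq_big => [u|u _] /=.
  by rewrite muln_gt0 p_gt0 andbT mulnA ltn_pmul2r // coprimeMl [coprime p P]pP andbT andbA.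
by rewrite expnMn mulnC.
Qed.

Lemma sum_nat_muln2 n : (\sum_(0 <= t < n) t) * 2 = n * n.-1.
Proof.
elim: n => [|n IHn]; first by rewrite big_geq.
by rewrite big_nat_recr //= mulnDl IHn; case: n {IHn} => /= [|n]; lia.
Qed.

Lemma Isum_1_1 M : Isum 1 1 M * 8 + (if odd M then 1 else 2 * M) = M ^ 2.
Proof.
have -> : Isum 1 1 M = \sum_(0 <= t < uphalf M) t.
  rewrite /Isum [RHS](big_nat_widen _ _ M) ?uphalf_half; last by lia.
  rewrite big_mkcond [RHS]big_mkcond; apply: eq_bigr => -[|t] _ /=; first by case: ifP.
  by rewrite coprimen1 expn1 andbT; congr (if _ then _ else _); lia.
have := sum_nat_muln2 (uphalf M); have := uphalfK M.
by case: (odd M) => /=; rewrite -!muln2; move: (uphalf M) => n; nia.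
Qed.

Local Open Scope ring_scope.

Definition defect (P M : nat) : rat :=
  (totient P)%:R * (M ^ 2)%:R / P%:R - 8 * (Isum 1 P M)%:R.

Lemma defect1 M : defect 1 M = if odd M then 1 else 2 * M%:R.
Proof.
rewrite /defect -(Isum_1_1 M) natrD natrM divr1 mul1r.
by case: (odd M); rewrite ?natrM; ring.
Qed.

Lemma defect_mul_prime p P M : prime p -> coprime p P -> (0 < P)%N -> (p %| M)%N ->
  defect (p * P) M = defect P M - p%:R * defect P (M %/ p).
Proof.
move=> p_pr pP P_gt0 /dvdnP[m ->]; have p_gt0 := prime_gt0 p_pr.
rewrite /defect totient_mul_prime // (@Isum_mul_prime 1 p P _ p_pr pP) ?dvdn_mull // mulnK //.
rewrite -subn1 !natrD !natrM !natrX natrB //; field.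
by rewrite !pnatr_eq0 -!lt0n P_gt0 p_gt0.
Qed.

Lemma defect_odd_primes s M :
  uniq s -> all prime s -> (2 \notin s)%N -> all (dvdn^~ M)%N s ->
  defect (\prod_(p <- s) p) M =
    if odd M then (-1) ^+ size s * (totient (\prod_(p <- s) p))%:R
    else if nilp s then 2 * M%:R else 0.
Proof.
elim: s M => [|p s IHs] M /=; first by rewrite big_nil defect1 mulr1.
case/andP=> p_s s_uniq /andP[p_pr s_pr]; rewrite inE negb_or => /andP[p_neq2 s_odd].
case/andP=> p_M s_M; have pP := prime_coprime_prod p_pr p_s s_pr.
have p_odd : odd p by case: (even_prime p_pr) p_neq2 => // ->.
have odd_divp : odd (M %/ p) = odd M by rewrite -[in RHS](divnK p_M) oddM p_odd andbT.
rewrite big_cons defect_mul_prime ?prod_primes_gt0 //.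
rewrite !IHs ?(all_dvdn_divn p_pr) // odd_divp totient_mul_prime //.
case: (odd M); first by rewrite natrM -subn1 natrB ?prime_gt0 // exprS; ring.
case: (nilp s); last by rewrite mulr0 subr0.
by rewrite -{1}(divnK p_M) natrM; ring.
Qed.

Lemma defect_two_primes s M :
  uniq s -> all prime s -> (2 \in s)%N -> (1 < size s)%N -> all (dvdn^~ M)%N s ->
  defect (\prod_(p <- s) p) M =
    if odd (M %/ 2) then 2 * ((-1) ^+ size s * (totient (\prod_(p <- s) p))%:R)
    else 0.
Proof.
move=> s_uniq s_pr two_s s_gt1 s_M; set s' := rem 2%N s.
have s'_pr : all prime s' by apply/allP=> p /mem_rem/(allP s_pr).
have two_s' : (2 \notin s')%N by rewrite mem_rem_uniqF.
have two_M : (2 %| M)%N by apply: (allP s_M).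
have s'_M : all (dvdn^~ M)%N s' by apply/allP=> p /mem_rem/(allP s_M).
have pP' : coprime 2 (\prod_(q <- s') q) by apply: prime_coprime_prod.
have size_s : size s = (size s').+1 by rewrite size_rem // prednK // ltnW.
have s'_nil : nilp s' = false by rewrite /nilp -eqSS -size_s; case: (size s) s_gt1 => [|[]].
rewrite (big_rem 2%N two_s) /= -/s' defect_mul_prime ?prod_primes_gt0 //.
rewrite !defect_odd_primes ?rem_uniq ?all_dvdn_divn //.
rewrite s'_nil totient_mul_prime // size_s exprS.
have -> : odd M = false by rewrite -(divnK two_M) oddM andbF.
by case: (odd (M %/ 2)); rewrite ?mulr0 ?subr0 // mul1n; ring.
Qed.

Lemma defect_nstar L M : (0 < L)%N -> (L %| M)%N -> (2 < nstar L)%N ->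
  defect (nstar L) M = (-1) ^+ size (primes L) * (totient (nstar L))%:R * (eps L M)%:R.
Proof.
move=> L_gt0 L_M nstar_gt2; have s_pr := all_prime_primes L.
have s_M : all (dvdn^~ M)%N (primes L).
  by apply/allP=> p; rewrite mem_primes => /and3P[_ _ /dvdn_trans]; apply.
rewrite /eps /nstar odd_prod_primes //; rewrite /nstar in nstar_gt2.
have [two_s | two_s] := boolP (2 \in primes L)%N; last first.
  rewrite defect_odd_primes ?primes_uniq //.
  have -> : nilp (primes L) = false by case: (primes L) nstar_gt2 => //; rewrite big_nil.
  by case: (odd M); rewrite ?andbF ?mulr1 ?mulr0.
have [m M_eq] : exists m, M = (m * 2)%N by apply/dvdnP/(allP s_M).
have s_gt1 : (1 < size (primes L))%N.
  by case: (primes L) two_s nstar_gt2 => [|p [|q r]] //; rewrite inE => /eqP <-; rewrite big_seq1.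
rewrite defect_two_primes ?primes_uniq // M_eq mulnK // oddM andbF andbT /=.
have -> : ((m * 2) %% 4 == 2)%N = odd m.
  have := odd_double_half m; rewrite -muln2.
  by case: (odd m) => /= m_eq; [apply/eqP | apply/negbTE/eqP]; lia.
by case: (odd m); rewrite ?mulr0 // mulrC.
Qed.

Theorem propositionA1 (M L : nat) (HM : (0 < M)%N) (HL : (0 < L)%N)
  (HLM : (L %| M)%N) (Hnstar : (2 < nstar L)%N) :
  ((Isum 1 L M)%:R : rat) =
    (totient (nstar L))%:R *
      ((M ^ 2)%:R / (nstar L)%:R - (-1) ^+ size (primes L) * (eps L M)%:R) / 8.
Proof.
have nstar_neq0 : (nstar L)%:R != 0 :> rat by rewrite pnatr_eq0 gtn_eqF // (ltn_trans _ Hnstar).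
rewrite -Isum_nstar //.
have -> : (Isum 1 (nstar L) M)%:R =
    ((totient (nstar L))%:R * (M ^ 2)%:R / (nstar L)%:R - defect (nstar L) M) / 8 :> rat.
  by rewrite /defect; field.
by rewrite defect_nstar //; ring.
Qed.
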